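(* Let $G$ be a connected graph with $n$ vertices, $k$ a positive integer, $\tau=\{1,\dots,k\}$, and $f:\tau\to\mathbb{Q}_{\ge1}$ a fitness function with $f(1)<f(2)<\dots<f(k)$. Let $M_0\in\Omega_0(G,\tau)$ and $M=M(G,\tau,f,M_0)$. Then for every $j\in\{2,\dots,k\}$, $\mathbb{E}(A_{\ge j})\le\sum_{i=j}^k\frac{f(i)}{f(i)-f(i-1)}(n+1)n^3$.
   Context: For $G=(V,E)$, $N(v)$ is the neighbourhood of $v$. For a state $S:V\to\tau$, $S|_{v\to w}$ equals $S$ except $w$ gets type $S(v)$. The Moran process $M(G,\tau,f,M_0)$: Markov chain on states from $M_0$; given $M_t$, choose $v$ with probability $f(M_t(v))/\sum_uf(M_t(u))$, then $w\in N(v)$ uniformly, set $M_{t+1}=M_t|_{v\to w}$. $V_i(t)=\{v:M_t(v)=i\}$. $\Omega_0(G,\tau)$ is the set of states with range $\tau$. For $j\in\{2,\dots,k\}$, $A_{\ge j}=\min\{t\in\mathbb{Z}_{\ge0}: \bigcup_{i\ge j}V_i(t)=\emptyset \text{ or } V_i(t)=V\text{ for some } i\ge j\}$. *)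

From mathcomp Require Import all_boot all_order all_algebra.
Set Implicit Arguments. Unset Strict Implicit. Unset Printing Implicit Defensive.
Import Order.TTheory GRing.Theory Num.Theory.
Local Open Scope ring_scope.

(* Types tau = {1,...,k} are encoded by 'I_k : ordinal i stands for type (i+1).
   The fitness function is f : nat -> rat, only its values on 1..k matter. *)

Section Moran.
Variables (V : finType) (adj : rel V) (k : nat) (f : nat -> rat).

Definition state := {ffun V -> 'I_k}.

Definition nbhd (v : V) : {set V} := [set w | adj v w].

Definition typ (S : state) (v : V) : nat := (S v).+1.

Definition fit (S : state) (v : V) : rat := f (typ S v).

Definition total_fit (S : state) : rat := \sum_(u : V) fit S u.

Definition upd (S : state) (v w : V) : state :=
  [ffun u => if u == w then S v else S u].

Definition trans (S S' : state) : rat :=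
  \sum_(v : V) \sum_(w in nbhd v)
     (if S' == upd S v w then fit S v / total_fit S / (#|nbhd v|)%:R else 0).

(* the stopping condition defining A_{>= j}: either no vertex has type >= j,
   or all vertices have the same type i >= j *)
Definition absorbed (j : nat) (S : state) : bool :=
  [forall u, typ S u < j]%N || [exists i : 'I_k, (j <= i.+1)%N && [forall u, S u == i]].

(* sub-probability mass at time t restricted to the event {A_{>=j} > t}:
   p t S = Pr(M_t = S and M_s is not absorbed for all s <= t) *)
Fixpoint alive (j : nat) (M0 : state) (t : nat) (S : state) : rat :=
  match t with
  | 0 => if (S == M0) && ~~ absorbed j M0 then 1 else 0
  | t'.+1 => if absorbed j S then 0
             else \sum_(S0 : state) alive j M0 t' S0 * trans S0 S
  end.

Definition prob_A_gt (j : nat) (M0 : state) (t : nat) : rat :=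
  \sum_(S : state) alive j M0 t S.

(* E(A_{>=j}) = sum_{t >= 0} Pr(A_{>=j} > t) (possibly +oo); 
   "E(A) <= B" means every partial sum of this nonnegative series is <= B. *)
Definition expectation_A_le (j : nat) (M0 : state) (B : rat) : Prop :=
  forall T : nat, \sum_(t < T) prob_A_gt j M0 t <= B.

End Moran.

Definition connected_graph (V : finType) (adj : rel V) : Prop :=
  forall x y : V, connect adj x y.

From mathcomp Require Import all_boot all_order all_algebra.
From mathcomp Require Import zify ring lra.
Set Implicit Arguments. Unset Strict Implicit. Unset Printing Implicit Defensive.
Import Order.TTheory GRing.Theory Num.Theory.
Local Open Scope ring_scope.

(* Additive drift.  Give each type i >= j the weight c_i = f(i) / (f(i) - f(i-1)),
   let psi(t) be the sum of the c_i with j <= i <= t, and take the potential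
   Phi(S) = sum_u psi(type of u) / deg u, which lies in [0, n C] with C = sum_i c_i.
   In one step an edge vw contributes (f_v - f_w)(psi_v - psi_w) / (W deg v deg w) >= 0
   to twice the expected increase of Phi, W being the total fitness.  Before
   absorption some vertex x of maximal type m >= j has a neighbour y of smaller type;
   that edge alone contributes at least c_m (f(m) - f(m-1)) / (n f(m) n n) = n^-3
   in each direction.  A potential bounded by B that grows in expectation by delta
   per step before absorption is absorbed within expected time B / delta, here
   n C n^3. *)

Section AdditiveDrift.
Variables (V : finType) (adj : rel V) (k : nat) (f : nat -> rat) (j : nat).
Variables (M0 : state V k) (Phi : state V k -> rat) (B delta : rat).
Hypothesis delta_gt0 : 0 < delta.
Hypothesis Phi_ge0 : forall S, 0 <= Phi S.
Hypothesis Phi_le : forall S, Phi S <= B.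
Hypothesis trans_ge0 : forall S S' : state V k, 0 <= trans adj f S S'.
Hypothesis trans_sum1 : forall S, ~~ absorbed j S ->
  \sum_(S' : state V k) trans adj f S S' = 1.
Hypothesis Phi_drift : forall S, ~~ absorbed j S ->
  Phi S + delta <= \sum_(S' : state V k) trans adj f S S' * Phi S'.

Local Notation mass := (alive adj f j M0).

Lemma alive_ge0 t S : 0 <= mass t S.
Proof.
elim: t S => [|t IH] S /=; first by case: ifP.
by case: ifP => // _; apply: sumr_ge0 => S0 _; apply: mulr_ge0.
Qed.

Lemma alive_absorbed t S : absorbed j S -> mass t S = 0.
Proof.
case: t => [|t] /= abs_S; last by rewrite abs_S.
by case: eqP => //= <-; rewrite abs_S.
Qed.

Lemma trans_slack S : ~~ absorbed j S ->
  \sum_(S' : state V k) trans adj f S S' * (B - Phi S') <= B - Phi S - delta.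
Proof.
move=> live; under eq_bigr do rewrite mulrBr.
by rewrite sumrB -mulr_suml trans_sum1 // mul1r; have := Phi_drift live; lra.
Qed.

(* slack t = E[B - Phi(M_t); A > t]; each step it drops by at least delta Pr(A > t). *)
Let slack t := \sum_(S : state V k) mass t S * (B - Phi S).

Lemma slack_ge0 t : 0 <= slack t.
Proof.
by apply: sumr_ge0 => S _; apply: mulr_ge0; rewrite ?alive_ge0 ?subr_ge0.
Qed.

Lemma slack0_le : slack 0 <= B.
Proof.
rewrite /slack (bigD1 M0) //= big1 => [|S /negbTE ->]; last by rewrite mul0r.
have := Phi_ge0 M0; have := Phi_le M0.
by case: ifP => _; rewrite ?mul0r ?mul1r addr0; lra.
Qed.

Lemma slack_step t : delta * prob_A_gt adj f j M0 t + slack t.+1 <= slack t.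
Proof.
have flow : slack t.+1 <= \sum_(S' : state V k)
    (\sum_(S : state V k) mass t S * trans adj f S S') * (B - Phi S').
  apply: ler_sum => S' _ /=; case: ifP => // _.
  rewrite mul0r; apply: mulr_ge0; last by rewrite subr_ge0.
  by apply: sumr_ge0 => S _; apply: mulr_ge0; rewrite ?alive_ge0.
have exchange : \sum_(S' : state V k)
    (\sum_(S : state V k) mass t S * trans adj f S S') * (B - Phi S') =
  \sum_(S : state V k) mass t S * \sum_(S' : state V k) trans adj f S S' * (B - Phi S').
  under eq_bigr do rewrite mulr_suml.
  rewrite exchange_big; apply: eq_bigr => S _; rewrite mulr_sumr.
  by apply: eq_bigr => S' _; rewrite mulrA.
have budget : \sum_(S : state V k) mass t S * \sum_(S' : state V k) trans adj f S S' * (B - Phi S')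
    <= \sum_(S : state V k) mass t S * (B - Phi S - delta).
  apply: ler_sum => S _; have [abs_S | live] := boolP (absorbed j S).
    by rewrite alive_absorbed // !mul0r.
  by apply: ler_wpM2l; [exact: alive_ge0 | exact: trans_slack].
have pay : \sum_(S : state V k) mass t S * (B - Phi S - delta) =
    slack t - delta * prob_A_gt adj f j M0 t.
  by rewrite /slack /prob_A_gt mulr_sumr -sumrB; apply: eq_bigr => S _; ring.
by move: flow budget; rewrite exchange pay; lra.
Qed.

Theorem expectation_A_le_drift : expectation_A_le adj f j M0 (B / delta).
Proof.
move=> T; have paid : delta * \sum_(t < T) prob_A_gt adj f j M0 t + slack T <= slack 0.
  elim: T => [|T IH]; first by rewrite big_ord0 mulr0 add0r.
  by rewrite big_ord_recr /= mulrDr; have := slack_step T; lra.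
rewrite ler_pdivlMr // mulrC.
by have := slack_ge0 T; have := slack0_le; lra.
Qed.

End AdditiveDrift.

Lemma ler_sum_term (I : finType) (R : numDomainType) (P : pred I) (F : I -> R) i :
  (forall l, P l -> 0 <= F l) -> P i -> F i <= \sum_(l | P l) F l.
Proof.
move=> F_ge0 Pi; rewrite (bigD1 i) //= lerDl.
by apply: sumr_ge0 => l /andP [Pl _]; exact: F_ge0.
Qed.

Lemma ler_sum_pair (I : finType) (R : numDomainType) (F : I -> R) i l :
  (forall m, 0 <= F m) -> i != l -> F i + F l <= \sum_m F m.
Proof.
move=> F_ge0 il; rewrite (bigD1 i) //= (bigD1 l) 1?eq_sym //= addrA lerDl.
exact: sumr_ge0.
Qed.

Section Levels.
Variables (j k : nat) (c : nat -> rat).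
Hypothesis c_ge0 : forall i, (j <= i <= k)%N -> 0 <= c i.

Definition level (t : nat) : rat := \sum_(j <= i < k.+1 | (i <= t)%N) c i.

Lemma ler_sum_subpred (P Q : pred nat) : (forall i, P i -> Q i) ->
  \sum_(j <= i < k.+1 | P i) c i <= \sum_(j <= i < k.+1 | Q i) c i.
Proof.
move=> PQ; rewrite big_mkcond [leRHS]big_mkcond !big_nat.
apply: ler_sum => i /c_ge0 ci; case: ifP => [/PQ -> // | _]; by case: ifP.
Qed.

Lemma level_ge0 t : 0 <= level t.
Proof. by rewrite /level big_nat_cond; apply: sumr_ge0 => i /andP [/c_ge0]. Qed.

Lemma level_le_sum t : level t <= \sum_(j <= i < k.+1) c i.
Proof. exact: ler_sum_subpred. Qed.

Lemma level_mono : {homo level : a b / (a <= b)%N >-> a <= b}.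
Proof. by move=> a b ab; apply: ler_sum_subpred => i /leq_trans; apply. Qed.

Lemma level_gap m b : (j <= m <= k)%N -> (b < m)%N -> c m <= level m - level b.
Proof.
move=> m_range bm; rewrite /level (bigID (fun i => i <= b)%N) /=.
have -> : \sum_(j <= i < k.+1 | (i <= m)%N && (i <= b)%N) c i = level b.
  by apply: eq_bigl => i; case: (leqP i b) => ib; rewrite ?andbF // andbT (leq_trans ib (ltnW bm)).
rewrite addrC addrK; apply: le_trans (ler_sum_subpred (P := pred1 m) _).
  by rewrite big_nat1_eq ltnS m_range.
by move=> i /eqP ->; rewrite leqnn -ltnNge bm.
Qed.

End Levels.

Section GraphFacts.
Variables (V : finType) (adj : rel V).

Lemma connect_cross (P : pred V) x y :
  connect adj x y -> P x -> ~~ P y -> exists a b, [/\ adj a b, P a & ~~ P b].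
Proof.
case/connectP=> p; elim: p x => [|z p IH] x /=; first by move=> _ -> ->.
move=> /andP [xz zp] y_last Px Py; case Pz: (P z); first exact: IH zp y_last Pz Py.
by exists x, z; rewrite Pz.
Qed.

Lemma card_nbhd_gt0 x y : connect adj x y -> x != y -> (0 < #|nbhd adj x|)%N.
Proof.
case/connectP=> [[|z p]] /= => [_ -> | /andP [xz _] _ _]; first by rewrite eqxx.
by apply/card_gt0P; exists z; rewrite inE.
Qed.

Lemma sum_nbhd_swap (R : nmodType) (G : V -> V -> R) : symmetric adj ->
  \sum_v \sum_(w in nbhd adj v) G v w = \sum_v \sum_(w in nbhd adj v) G w v.
Proof.
move=> adj_sym; under eq_bigr do rewrite big_mkcond.
rewrite [LHS]exchange_big; apply: eq_bigr => v _; rewrite [RHS]big_mkcond.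
by apply: eq_bigr => w _; rewrite !inE adj_sym.
Qed.

End GraphFacts.

Section MoranPotential.
Variables (V : finType) (adj : rel V) (k : nat) (f : nat -> rat) (j : nat).
Hypothesis adj_sym : symmetric adj.
Hypothesis G_conn : connected_graph adj.
Hypothesis f_ge1 : forall i : nat, (1 <= i <= k)%N -> 1 <= f i.
Hypothesis f_incr : forall i : nat, (1 <= i)%N -> (i < k)%N -> f i < f i.+1.
Hypothesis hj : (2 <= j <= k)%N.

Lemma f_le a b : (1 <= a)%N -> (a <= b)%N -> (b <= k)%N -> f a <= f b.
Proof.
move=> a_ge1 + b_le; elim: b b_le => [|b IH] b_le; first by lia.
rewrite leq_eqVlt => /orP [/eqP -> // | ab].
by apply: le_trans (IH (ltnW b_le) ab) (ltW (f_incr _ _)); lia.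
Qed.

Lemma f_predn_lt i : (j <= i <= k)%N -> f i.-1 < f i.
Proof. by move=> i_range; have := @f_incr i.-1; rewrite prednK; [apply|..]; lia. Qed.

Definition weight (i : nat) : rat := f i / (f i - f i.-1).

Lemma weight_gt0 i : (j <= i <= k)%N -> 0 < weight i.
Proof.
move=> i_range; have := f_predn_lt i_range; have : 1 <= f i by apply: f_ge1; lia.
by move=> fi_ge1 f_lt; apply: divr_gt0; lra.
Qed.

Lemma weight_ge0 i : (j <= i <= k)%N -> 0 <= weight i.
Proof. by move/weight_gt0/ltW. Qed.

Lemma weight_mul_step i : (j <= i <= k)%N -> weight i * (f i - f i.-1) = f i.
Proof. by move/f_predn_lt => f_lt; rewrite /weight mulfVK // subr_eq0 gt_eqF. Qed.

Local Notation psi := (level j k weight).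

Definition deg (v : V) : rat := #|nbhd adj v|%:R.

Definition potential (S : state V k) : rat := \sum_u psi (typ S u) / deg u.

Lemma typ_range (S : state V k) u : (1 <= typ S u <= k)%N.
Proof. by rewrite /typ ltn_ord. Qed.

Lemma fit_ge1 (S : state V k) v : 1 <= fit f S v.
Proof. exact: f_ge1 (typ_range S v). Qed.

Lemma trans_ge0 (S S' : state V k) : 0 <= trans adj f S S'.
Proof.
apply: sumr_ge0 => v _; apply: sumr_ge0 => w _; case: ifP => // _.
apply: divr_ge0 => //; apply: divr_ge0; first by have := fit_ge1 S v; lra.
by apply: sumr_ge0 => u _; have := fit_ge1 S u; lra.
Qed.

Lemma trans_expect (S : state V k) (g : state V k -> rat) :
  \sum_(S' : state V k) trans adj f S S' * g S' =
  \sum_v \sum_(w in nbhd adj v) fit f S v / total_fit f S / deg v * g (upd S v w).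
Proof.
rewrite /trans; under eq_bigr do rewrite mulr_suml.
rewrite exchange_big; apply: eq_bigr => v _.
under eq_bigr do rewrite mulr_suml.
rewrite exchange_big; apply: eq_bigr => w _.
by rewrite (bigD1 (upd S v w)) //= eqxx big1 ?addr0 // => S' /negbTE ->; rewrite mul0r.
Qed.

Lemma typ_upd (S : state V k) v w u :
  typ (upd S v w) u = if u == w then typ S v else typ S u.
Proof. by rewrite /typ /upd ffunE; case: eqP. Qed.

Lemma potential_upd (S : state V k) v w :
  potential (upd S v w) = potential S + (psi (typ S v) - psi (typ S w)) / deg w.
Proof.
rewrite /potential (bigD1 w) //= [in RHS](bigD1 w) //= typ_upd eqxx.
under eq_bigr => u /negbTE u_neq_w do rewrite typ_upd u_neq_w.
by rewrite mulrBl; ring.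
Qed.

Lemma potential_ge0 (S : state V k) : 0 <= potential S.
Proof. by apply: sumr_ge0 => u _; rewrite divr_ge0 ?level_ge0 //; exact: weight_ge0. Qed.

Lemma potential_le (S : state V k) : potential S <= #|V|%:R * \sum_(j <= i < k.+1) weight i.
Proof.
rewrite mulr_natl -sumr_const; apply: ler_sum => u _.
apply: le_trans (level_le_sum weight_ge0 (typ S u)); rewrite /deg.
have psi_ge0 := level_ge0 weight_ge0 (typ S u).
case: #|_| => [|d]; first by rewrite invr0 mulr0.
by rewrite ler_pdivrMr ?ltr0Sn // ler_peMr // ler1n.
Qed.

Lemma not_absorbed_edge (S : state V k) : ~~ absorbed j S -> exists x y,
  [/\ adj x y, forall u, (typ S u <= typ S x)%N, (typ S y < typ S x)%N & (j <= typ S x)%N].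
Proof.
rewrite /absorbed negb_or negb_forall negb_exists.
case/andP=> /existsP [u0 u0_ge_j] /forallP not_const.
have [x0 _ x0_max] := @arg_maxnP V u0 predT (typ S) isT.
have j_le_x0 : (j <= typ S x0)%N by have := x0_max u0 isT; move: u0_ge_j; lia.
have /existsP [y0 y0_ne] : [exists u, S u != S x0].
  by move: (not_const (S x0)); rewrite negb_and j_le_x0 /= negb_forall.
have y0_lt : (typ S y0 < typ S x0)%N.
  have : typ S y0 != typ S x0 by rewrite eqSS.
  by have := x0_max y0 isT; rewrite /geq; lia.
have [a [b [ab /eqP a_eq b_ne]]] :=
  connect_cross (P := fun u => typ S u == typ S x0) (G_conn x0 y0) (eqxx _) (negbT (ltn_eqF y0_lt)).
exists a, b; rewrite a_eq; split => // [u | ]; first exact: x0_max u isT.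
by have := x0_max b isT; move: b_ne; rewrite /geq; lia.
Qed.

Lemma total_fit_gt0 (S : state V k) (x : V) : 0 < total_fit f S.
Proof.
apply: lt_le_trans (ler_sum_term (P := xpredT) _ (isT : xpredT x)).
  by have := fit_ge1 S x; lra.
by move=> v _; have := fit_ge1 S v; lra.
Qed.

Section TwoVertices.
Variables (x y : V).
Hypothesis x_neq_y : x != y.

Lemma deg_gt0 v : 0 < deg v.
Proof.
rewrite ltr0n; have [-> | v_neq_x] := eqVneq v x.
  exact: card_nbhd_gt0 (G_conn x y) x_neq_y.
exact: card_nbhd_gt0 (G_conn v x) v_neq_x.
Qed.

Lemma choice_sum1 (S : state V k) :
  \sum_v \sum_(w in nbhd adj v) fit f S v / total_fit f S / deg v = 1.
Proof.
have W_gt0 := total_fit_gt0 S x.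
transitivity (\sum_v fit f S v / total_fit f S); last by rewrite -mulr_suml divff ?gt_eqF.
apply: eq_bigr => v _; rewrite sumr_const -mulr_natr.
by rewrite mulfVK // gt_eqF // deg_gt0.
Qed.

Lemma trans_sum1 (S : state V k) : \sum_(S' : state V k) trans adj f S S' = 1.
Proof.
under eq_bigr do rewrite -[trans _ _ _ _]mulr1.
by rewrite trans_expect -[RHS](choice_sum1 S); under eq_bigr do under eq_bigr do rewrite mulr1.
Qed.

End TwoVertices.

Section Drift.
Variables (S : state V k) (x y : V).
Hypothesis xy : adj x y.
Hypothesis x_max : forall u, (typ S u <= typ S x)%N.
Hypothesis y_lt_x : (typ S y < typ S x)%N.
Hypothesis j_le_x : (j <= typ S x)%N.

Let x_neq_y : x != y.
Proof. by apply: contraTneq y_lt_x => ->; rewrite ltnn. Qed.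

Let W := total_fit f S.
Let n : rat := #|V|%:R.
Let W_gt0 : 0 < W := total_fit_gt0 S x.
Let deg_pos := deg_gt0 x_neq_y.
Let choice v := fit f S v / W / deg v.
Let gain v w := choice v * ((psi (typ S v) - psi (typ S w)) / deg w).
Let edge_gain v w := (f (typ S v) - f (typ S w)) * (psi (typ S v) - psi (typ S w))
  / (W * deg v * deg w).

Lemma expected_potential : \sum_(S' : state V k) trans adj f S S' * potential S' =
  potential S + \sum_v \sum_(w in nbhd adj v) gain v w.
Proof.
rewrite trans_expect; under eq_bigr do under eq_bigr do rewrite potential_upd mulrDr.
under eq_bigr do rewrite big_split; rewrite big_split /=; congr (_ + _).
by rewrite -[RHS]mul1r -(choice_sum1 x_neq_y S) mulr_suml; apply: eq_bigr => v _; rewrite mulr_suml.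
Qed.

Lemma gain_sym v w : gain v w + gain w v = edge_gain v w.
Proof.
rewrite /gain /choice /edge_gain /fit.
by field; rewrite !lt0r_neq0 ?deg_pos.
Qed.

Lemma edge_gain_ge0 v w : 0 <= edge_gain v w.
Proof.
apply: divr_ge0; last by rewrite !mulr_ge0 // ltW ?deg_pos.
have [rv rw] := (typ_range S v, typ_range S w).
have psi_mono := level_mono weight_ge0.
case: (leqP (typ S v) (typ S w)) => [le_vw | /ltnW le_wv].
  have : f (typ S v) <= f (typ S w) by apply: f_le; lia.
  by have := psi_mono _ _ le_vw; nra.
have : f (typ S w) <= f (typ S v) by apply: f_le; lia.
by have := psi_mono _ _ le_wv; nra.
Qed.

(* Along xy the fitness drops by at least f(m) - f(m-1) and psi by at least
   weight m, and the product of these two drops is f(m). *)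
Lemma edge_gain_crossing : (n ^+ 3)^-1 <= edge_gain x y.
Proof.
set m := typ S x; have [rx ry] := (typ_range S x, typ_range S y).
have m_range : (j <= m <= k)%N by rewrite j_le_x; case/andP: rx.
have f_step : f (typ S y) <= f m.-1 by apply: f_le; lia.
have psi_gap := level_gap weight_ge0 m_range y_lt_x.
have weight_m := weight_mul_step m_range.
have fm_pos := f_predn_lt m_range.
have weight_pos := weight_gt0 m_range.
have num_ge : f m <= (f m - f (typ S y)) * (psi m - psi (typ S y)).
  by rewrite -[X in X <= _]weight_m mulrC; apply: ler_pM; lra.
have deg_le v : deg v <= n by rewrite /deg ler_nat max_card.
have W_le : W <= n * f m.
  rewrite mulr_natl -sumr_const; apply: ler_sum => u _.
  by apply: f_le; rewrite ?x_max //; have := typ_range S u; lia.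
have [dx dy] := (deg_le x, deg_le y); have [dx_gt0 dy_gt0] := (deg_pos x, deg_pos y).
have den_le : W * deg x * deg y <= n ^+ 3 * f m.
  have -> : n ^+ 3 * f m = n * f m * n * n by ring.
  have [W_ge0 dx_ge0] := (ltW W_gt0, ltW dx_gt0).
  apply: ler_pM => //; [exact: mulr_ge0 | exact: ler_pM].
have n_gt0 : 0 < n by apply: lt_le_trans dx_gt0 dx.
rewrite /edge_gain ler_pdivlMr ?mulr_gt0 //; apply: le_trans num_ge.
by rewrite ler_pdivrMl ?exprn_gt0.
Qed.

Lemma potential_drift : potential S + (n ^+ 3)^-1 <=
  \sum_(S' : state V k) trans adj f S S' * potential S'.
Proof.
rewrite expected_potential lerD2l.
have twice : 2 * \sum_v \sum_(w in nbhd adj v) gain v w =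
    \sum_v \sum_(w in nbhd adj v) edge_gain v w.
  rewrite mulr2n mulrDl mul1r {2}(sum_nbhd_swap _ adj_sym) -big_split.
  by apply: eq_bigr => v _; rewrite -big_split; apply: eq_bigr => w _; exact: gain_sym.
have pair : edge_gain x y + edge_gain y x <= \sum_v \sum_(w in nbhd adj v) edge_gain v w.
  apply: le_trans (ler_sum_pair _ x_neq_y); last first.
    by move=> v; apply: sumr_ge0 => *; exact: edge_gain_ge0.
  apply: lerD; apply: ler_sum_term; rewrite ?inE // 1?adj_sym // => *; exact: edge_gain_ge0.
have sym : edge_gain y x = edge_gain x y.
  by rewrite /edge_gain -mulrA [_ * deg y]mulrC mulrA; congr (_ / _); ring.
by move: pair twice; rewrite sym; have := edge_gain_crossing; lra.
Qed.

End Drift.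

Lemma trans_sum1_not_absorbed (S : state V k) : ~~ absorbed j S ->
  \sum_(S' : state V k) trans adj f S S' = 1.
Proof.
case/not_absorbed_edge=> x [y [_ _ y_lt_x _]]; apply: (@trans_sum1 x y).
by apply: contraTneq y_lt_x => ->; rewrite ltnn.
Qed.

Lemma potential_drift_not_absorbed (S : state V k) : ~~ absorbed j S ->
  potential S + (#|V|%:R ^+ 3)^-1 <= \sum_(S' : state V k) trans adj f S S' * potential S'.
Proof.
case/not_absorbed_edge=> x [y [xy x_max y_lt_x j_le_x]].
exact: potential_drift xy x_max y_lt_x j_le_x.
Qed.

End MoranPotential.

Lemma absorbed_card0 (V : finType) (k j : nat) (S : state V k) :
  #|V| = 0%N -> absorbed j S.
Proof. by move=> V0; apply/orP; left; apply/forallP => u; move: (card0_eq V0 u). Qed.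

Theorem lemma17 (V : finType) (adj : rel V)
  (adj_sym : symmetric adj) (adj_irr : irreflexive adj)
  (G_conn : connected_graph adj)
  (k : nat) (k_pos : (0 < k)%N) (f : nat -> rat)
  (f_ge1 : forall i : nat, (1 <= i <= k)%N -> 1 <= f i)
  (f_incr : forall i : nat, (1 <= i)%N -> (i < k)%N -> f i < f i.+1)
  (M0 : state V k) (j : nat) (hj : (2 <= j <= k)%N) :
  expectation_A_le adj f j M0
    (\sum_(j <= i < k.+1) f i / (f i - f i.-1)
        * ((#|V| + 1) * #|V| ^ 3)%:R).
Proof.
move=> T; rewrite -mulr_suml.
have [V0 | V_gt0] := posnP #|V|.
  rewrite V0 mulr0 big1 // => t _; rewrite /prob_A_gt big1 // => S _.
  exact/alive_absorbed/absorbed_card0.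
set n : rat := #|V|%:R; have n_gt0 : 0 < n by rewrite ltr0n.
set C := \sum_(j <= i < k.+1) weight f i.
have C_ge0 : 0 <= C by rewrite /C big_nat; apply: sumr_ge0 => i; apply: weight_ge0.
have delta_gt0 : 0 < (n ^+ 3)^-1 by rewrite invr_gt0 exprn_gt0.
move: (expectation_A_le_drift M0 delta_gt0
  (potential_ge0 adj f_ge1 f_incr hj) (potential_le adj f_ge1 f_incr hj)
  (trans_ge0 adj f_ge1) (trans_sum1_not_absorbed G_conn f_ge1 hj)
  (potential_drift_not_absorbed adj_sym G_conn f_ge1 f_incr hj) T).
move/le_trans; apply; rewrite -/C invrK natrM natrX natrD -/n.
rewrite [n * C]mulrC -mulrA ler_wpM2l // ler_wpM2r ?lerDl //.
exact/exprn_ge0/ltW.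
Qed.
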